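(* Let $G=(V,E)$ be a connected, locally finite graph with edge weights $w_{xy}\ge w_{min}>0$ for all $xy\in E$ and $\mu\le\mu_{max}$ on $V$, and let $\alpha\in(0,1)$. Suppose $u:(0,\infty)\times V\to(0,\infty)$ is $C^1$ in time and satisfies $$\partial_t(\log u)\ge\Psi_\Upsilon(\log u)-\tfrac1\alpha\Psi_{\Upsilon_\alpha}(\log u)-\eta_\alpha(t)\quad\text{on }(0,\infty)\times V,$$ where $\eta_\alpha:(0,\infty)\to[0,\infty)$ is continuous. Then for any $0<t_1<t_2$ and $x_1,x_2\in V$, $$u(t_1,x_1)\le u(t_2,x_2)\exp\Big(\int_{t_1}^{t_2}\eta_\alpha(t)\,dt+\frac{2\mu_{max}\,d(x_1,x_2)^2}{w_{min}(1-\alpha)(t_2-t_1)}\Big).$$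
   Context: Graphs are undirected; $x\sim y$ means $xy\in E$; $w_{xy}=w_{yx}>0$; $\mu:V\to(0,\infty)$; $d$ is the combinatorial graph distance. For $H:\mathbb R\to\mathbb R$, $\Psi_H(v)(x)=\frac1{\mu(x)}\sum_{y\sim x}w_{xy}H(v(y)-v(x))$; $\Upsilon(z)=e^z-1-z$ and $\Upsilon_\alpha(z)=\Upsilon(\alpha z)$. *)

From Stdlib Require Import Reals Lra List.
Open Scope R_scope.

Definition Ups (z : R) : R := exp z - 1 - z.
Definition Ups_a (a z : R) : R := Ups (a * z).

(* Psi_H(v)(x) = 1/mu(x) * sum_{y ~ x} w_xy H(v(y) - v(x)),
   the neighbours of x being listed (without repetition) by nbrs x. *)
Definition Psi {V : Type} (nbrs : V -> list V) (w : V -> V -> R) (mu : V -> R)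
  (H : R -> R) (v : V -> R) (x : V) : R :=
  / mu x * fold_right (fun y acc => w x y * H (v y - v x) + acc) 0 (nbrs x).

Inductive walk {V : Type} (adj : V -> V -> Prop) : nat -> V -> V -> Prop :=
| walk0 : forall x, walk adj 0 x x
| walkS : forall n x y z, adj x y -> walk adj n y z -> walk adj (S n) x z.

Definition graph_dist {V : Type} (adj : V -> V -> Prop) (x y : V) (n : nat) : Prop :=
  walk adj n x y /\ forall m, walk adj m x y -> (n <= m)%nat.

Definition connected {V : Type} (adj : V -> V -> Prop) : Prop :=
  forall x y : V, exists n, walk adj n x y.

(* Put [f t x = ln u(t,x) + \int_{t1}^t eta].  The hypothesis makes [f] nondecreasing in time
   and, for every edge [xy], gives [d/dt f(t,x) >= c H(f(t,y) - f(t,x))] with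
   [c = wmin / mumax] and [H z = Ups z - Ups(alpha z) / alpha >= (1 - alpha) z^2 / 2] for [z >= 0].
   Along an edge the gap [phi r = f(a,y) - f(r,x)] therefore obeys the Riccati inequality
   [phi' <= - c (1 - alpha) phi^2 / 2] while it is positive, so after a time [tau] it is at most
   [2 / (c (1 - alpha) tau)].  Following a geodesic of length [n] in [n] time steps of length
   [(t2 - t1) / n] gives the bound [2 n^2 / (c (1 - alpha) (t2 - t1))]. *)

From Stdlib Require Import Reals List Lra.
From Coquelicot Require Import Coquelicot.
Open Scope R_scope.

Lemma exp_le_mono (x y : R) : x <= y -> exp x <= exp y.
Proof.
  intros [Hlt | ->]; [left; apply exp_increasing; exact Hlt | right; reflexivity].
Qed.

Lemma le_of_deriv_nonneg (F F' : R -> R) (a b : R) : a <= b ->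
  (forall t, a <= t <= b -> derivable_pt_lim F t (F' t)) ->
  (forall t, a <= t <= b -> 0 <= F' t) -> F a <= F b.
Proof.
  intros Hab HD HF'. destruct (Req_dec a b) as [-> | Hne]; [lra |].
  destruct (MVT_cor2 F F' a b ltac:(lra) HD) as [c [Hc Hc_in]].
  assert (0 <= F' c * (b - a)) by (apply Rmult_le_pos; [apply HF' |]; lra).
  lra.
Qed.

Lemma le_at_zero_of_deriv_sign (F F' : R -> R) :
  (forall t, derivable_pt_lim F t (F' t)) ->
  (forall t, 0 <= t -> 0 <= F' t) -> (forall t, t <= 0 -> F' t <= 0) ->
  forall z, F 0 <= F z.
Proof.
  intros HD Hpos Hneg z. destruct (Rle_lt_dec 0 z) as [Hz | Hz].
  - apply (le_of_deriv_nonneg F F'); auto; intros t Ht; apply Hpos; lra.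
  - enough (- F z <= - F 0) by lra.
    apply (le_of_deriv_nonneg (fun s => - F s) (fun s => - F' s)); [lra | |].
    + intros t _. apply derivable_pt_lim_opp, HD.
    + intros t Ht. assert (F' t <= 0) by (apply Hneg; lra). lra.
Qed.

Lemma RInt_derivable_pt_lim (eta : R -> R) (lo t1 t : R) :
  (forall s, lo < s -> continuity_pt eta s) -> lo < t1 -> lo < t ->
  derivable_pt_lim (fun s => RInt eta t1 s) t (eta t).
Proof.
  intros Hc Ht1 Ht. apply is_derive_Reals, (is_derive_RInt _ _ t1).
  - assert (Hd : 0 < (t - lo) / 2) by lra.
    exists (mkposreal _ Hd). intros b Hb.
    change (Rabs (b - t) < (t - lo) / 2) in Hb. apply Rabs_def2 in Hb.
    apply (RInt_correct eta t1 b), ex_RInt_continuous. intros s Hs.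
    apply continuity_pt_filterlim, Hc.
    assert (lo < Rmin t1 b) by (apply Rmin_glb_lt; lra). lra.
  - apply continuity_pt_filterlim, Hc. exact Ht.
Qed.

Lemma le_mul_exp_of_ln_le (a b s : R) : 0 < a -> 0 < b ->
  ln a <= ln b + s -> a <= b * exp s.
Proof.
  intros Ha Hb Hln. rewrite <- (exp_ln a), <- (exp_ln b), <- exp_plus by assumption.
  apply exp_le_mono. exact Hln.
Qed.

Definition Ups_gap (a z : R) : R := Ups z - / a * Ups_a a z.

Lemma Ups_gap_0 (a : R) : 0 < a -> Ups_gap a 0 = 0.
Proof.
  intro Ha. unfold Ups_gap, Ups_a, Ups. rewrite Rmult_0_r, exp_0. field. lra.
Qed.

Lemma Ups_gap_derive (a z : R) : 0 < a ->
  derivable_pt_lim (Ups_gap a) z (exp z - exp (a * z)).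
Proof.
  intro Ha. apply is_derive_Reals. unfold Ups_gap, Ups_a, Ups.
  auto_derive; [trivial | field; lra].
Qed.

Lemma Ups_gap_nonneg (a z : R) : 0 < a < 1 -> 0 <= Ups_gap a z.
Proof.
  intro Ha. rewrite <- (Ups_gap_0 a) by lra.
  apply (le_at_zero_of_deriv_sign _ (fun t => exp t - exp (a * t))).
  - intro t. apply Ups_gap_derive. lra.
  - intros t Ht. assert (exp (a * t) <= exp t) by (apply exp_le_mono; nra). lra.
  - intros t Ht. assert (exp t <= exp (a * t)) by (apply exp_le_mono; nra). lra.
Qed.

Lemma Ups_gap_ge_sqr (a z : R) : 0 < a < 1 -> 0 <= z -> (1 - a) / 2 * z ^ 2 <= Ups_gap a z.
Proof.
  intros Ha Hz.
  set (G' := fun t => exp t - exp (a * t) - (1 - a) * t).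
  assert (HG' : forall t, 0 <= t -> 0 <= G' t).
  { intros t Ht. replace 0 with (G' 0) by (unfold G'; rewrite Rmult_0_r, exp_0; ring).
    (* [G''(s) = (exp s - exp (a s)) + (1 - a) (exp (a s) - 1) >= 0] for [s >= 0]. *)
    apply (le_of_deriv_nonneg G' (fun s => exp s - a * exp (a * s) - (1 - a))); [exact Ht | |].
    - intros s _. apply is_derive_Reals. unfold G'. auto_derive; [trivial | ring].
    - intros s Hs.
      assert (exp (a * s) <= exp s) by (apply exp_le_mono; nra).
      assert (1 <= exp (a * s)) by (rewrite <- exp_0; apply exp_le_mono; nra).
      nra. }
  enough (Ups_gap a 0 - (1 - a) / 2 * 0 ^ 2 <= Ups_gap a z - (1 - a) / 2 * z ^ 2)
    by (rewrite Ups_gap_0 in *; lra).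
  apply (le_of_deriv_nonneg (fun s => Ups_gap a s - (1 - a) / 2 * s ^ 2) G'); [exact Hz | |].
  - intros s _. apply is_derive_Reals.
    apply (is_derive_ext (fun s => Ups s - / a * Ups_a a s - (1 - a) / 2 * s ^ 2));
      [reflexivity |].
    unfold Ups_a, Ups, G'. auto_derive; [trivial | field; lra].
  - intros s Hs. apply HG'. lra.
Qed.

Lemma riccati_gap_bound (F F' : R -> R) (A k a b : R) : 0 < k -> a < b ->
  (forall r, a <= r <= b -> derivable_pt_lim F r (F' r)) ->
  (forall r, a <= r <= b -> 0 <= F' r) ->
  (forall r, a <= r <= b -> 0 < A - F r -> k * (A - F r) ^ 2 <= F' r) ->
  A <= F b + / (k * (b - a)).
Proof.
  intros Hk Hab HD HF' HRic.
  assert (Hkab : 0 < k * (b - a)) by (apply Rmult_lt_0_compat; lra).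
  destruct (Rle_lt_dec (A - F b) 0) as [Hle | Hgap].
  { assert (0 < / (k * (b - a))) by (apply Rinv_0_lt_compat; exact Hkab). lra. }
  assert (HFb : forall r, a <= r <= b -> F r <= F b).
  { intros r Hr. apply (le_of_deriv_nonneg F F'); [lra | |];
      intros s Hs; [apply HD | apply HF']; lra. }
  assert (Hinv : / (A - F a) - k * a <= / (A - F b) - k * b).
  { apply (le_of_deriv_nonneg (fun r => / (A - F r) - k * r)
                              (fun r => F' r / (A - F r) ^ 2 - k)); [lra | |].
    - intros r Hr. apply is_derive_Reals.
      assert (Hpos : 0 < A - F r) by (specialize (HFb r Hr); lra).
      assert (HAF : is_derive (fun r => A - F r) r (- F' r)).
      { apply is_derive_Reals. replace (- F' r) with (0 - F' r) by ring.
        apply (derivable_pt_lim_minus (fun _ => A));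
          [apply derivable_pt_lim_const | apply HD, Hr]. }
      replace (F' r / (A - F r) ^ 2 - k) with (- (- F' r) / (A - F r) ^ 2 + - (k * 1))
        by (field; lra).
      apply (is_derive_minus _ _ _ _ _ (is_derive_inv _ _ _ HAF ltac:(lra))).
      apply is_derive_scal, is_derive_Reals, derivable_pt_lim_id.
    - intros r Hr.
      assert (Hpos : 0 < A - F r) by (specialize (HFb r Hr); lra).
      assert (Hsq : 0 < (A - F r) ^ 2) by (apply pow_lt; exact Hpos).
      specialize (HRic r Hr Hpos).
      apply (Rmult_le_reg_r ((A - F r) ^ 2)); [exact Hsq |].
      replace ((F' r / (A - F r) ^ 2 - k) * (A - F r) ^ 2) with (F' r - k * (A - F r) ^ 2)
        by (field; lra).
      lra. }
  assert (0 < / (A - F a)) by (apply Rinv_0_lt_compat; specialize (HFb a ltac:(lra)); lra).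
  enough (A - F b < / (k * (b - a))) by lra.
  rewrite <- (Rinv_inv (A - F b)).
  apply Rinv_lt_contravar; [apply Rmult_lt_0_compat; [exact Hkab | apply Rinv_0_lt_compat; lra] |].
  lra.
Qed.

Lemma Ups_gap_transfer (Fx Fy Fy' : R -> R) (a b c al : R) : 0 < al < 1 -> 0 < c -> a < b ->
  (forall r, a <= r <= b -> Fx a <= Fx r) ->
  (forall r, a <= r <= b -> derivable_pt_lim Fy r (Fy' r)) ->
  (forall r, a <= r <= b -> c * Ups_gap al (Fx r - Fy r) <= Fy' r) ->
  Fx a <= Fy b + 2 / (c * (1 - al)) / (b - a).
Proof.
  intros Hal Hc Hab HFx HD HI.
  replace (2 / (c * (1 - al)) / (b - a)) with (/ (c * (1 - al) / 2 * (b - a)))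
    by (field; repeat split; lra).
  apply (riccati_gap_bound Fy Fy'); [nra | exact Hab | exact HD | |].
  - intros r Hr. specialize (HI r Hr).
    pose proof (Ups_gap_nonneg al (Fx r - Fy r) Hal). nra.
  - intros r Hr Hpos. specialize (HI r Hr). specialize (HFx r Hr).
    pose proof (Ups_gap_ge_sqr al (Fx r - Fy r) Hal ltac:(lra)).
    assert ((Fx a - Fy r) ^ 2 <= (Fx r - Fy r) ^ 2) by (simpl; nra).
    apply Rle_trans with (c * ((1 - al) / 2 * (Fx r - Fy r) ^ 2)); [| nra].
    replace (c * (1 - al) / 2 * (Fx a - Fy r) ^ 2) with (c * ((1 - al) / 2 * (Fx a - Fy r) ^ 2))
      by field.
    apply Rmult_le_compat_l; [lra |]. apply Rmult_le_compat_l; lra.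
Qed.

Section Walk_chain.
Variables (V : Type) (adj : V -> V -> Prop) (f : R -> V -> R) (t1 K : R).
Hypothesis f_mono : forall x a b, t1 <= a <= b -> f a x <= f b x.
Hypothesis f_step : forall x y a tau, adj x y -> t1 <= a -> 0 < tau ->
  f a x <= f (a + tau) y + K / tau.

Lemma walk_chain (m : nat) (x z : V) : walk adj m x z -> forall a tau, t1 <= a -> 0 < tau ->
  f a x <= f (a + INR m * tau) z + INR m * (K / tau).
Proof.
  induction 1 as [x | m x y z Hxy _ IH]; intros a tau Ha Htau.
  - simpl. replace (a + 0 * tau) with a by ring. lra.
  - specialize (f_step x y a tau Hxy Ha Htau).
    specialize (IH (a + tau) tau ltac:(lra) Htau).
    rewrite S_INR. replace (a + (INR m + 1) * tau) with (a + tau + INR m * tau) by ring.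
    lra.
Qed.

Lemma walk_bound (n : nat) (x z : V) (t2 : R) : walk adj n x z -> t1 < t2 ->
  f t1 x <= f t2 z + INR n ^ 2 * K / (t2 - t1).
Proof.
  intros Hwalk Ht12. destruct n as [| m].
  - inversion Hwalk; subst. simpl.
    replace (0 * 1 * K / (t2 - t1)) with 0 by (field; lra).
    pose proof (f_mono z t1 t2 ltac:(lra)). lra.
  - assert (Hm : 0 < INR (S m)) by apply (lt_0_INR _ (Nat.lt_0_succ m)).
    pose proof (walk_chain _ _ _ Hwalk t1 ((t2 - t1) / INR (S m)) ltac:(lra)
                  ltac:(apply Rdiv_lt_0_compat; lra)) as Hchain.
    replace (t1 + INR (S m) * ((t2 - t1) / INR (S m))) with t2 in Hchain by (field; lra).
    replace (INR (S m) ^ 2 * K / (t2 - t1)) with (INR (S m) * (K / ((t2 - t1) / INR (S m))))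
      by (field; lra).
    exact Hchain.
Qed.

End Walk_chain.

Lemma fold_right_sum_nonneg {V : Type} (T : V -> R) (l : list V) :
  (forall z, In z l -> 0 <= T z) -> 0 <= fold_right (fun y acc => T y + acc) 0 l.
Proof.
  induction l as [| z l IH]; intros HT; simpl; [lra |].
  assert (0 <= T z) by (apply HT; left; reflexivity).
  assert (0 <= fold_right (fun y acc => T y + acc) 0 l)
    by (apply IH; intros; apply HT; right; auto).
  lra.
Qed.

Lemma fold_right_sum_ge_term {V : Type} (T : V -> R) (l : list V) (y : V) :
  (forall z, In z l -> 0 <= T z) -> In y l -> T y <= fold_right (fun y acc => T y + acc) 0 l.
Proof.
  induction l as [| z l IH]; intros HT Hy; [destruct Hy |]. simpl.
  destruct Hy as [-> | Hy].
  - assert (0 <= fold_right (fun y acc => T y + acc) 0 l)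
      by (apply fold_right_sum_nonneg; intros; apply HT; right; auto).
    lra.
  - assert (0 <= T z) by (apply HT; left; reflexivity).
    assert (T y <= fold_right (fun y acc => T y + acc) 0 l)
      by (apply IH; auto; intros; apply HT; right; auto).
    lra.
Qed.

Section Weighted_graph.
Variables (V : Type) (adj : V -> V -> Prop) (nbrs : V -> list V).
Variables (w : V -> V -> R) (mu : V -> R) (wmin mumax : R).
Hypothesis nbrs_adj : forall x y, In y (nbrs x) <-> adj x y.
Hypothesis wmin_pos : 0 < wmin.
Hypothesis w_ge : forall x y, adj x y -> wmin <= w x y.
Hypothesis mu_pos : forall x, 0 < mu x.
Hypothesis mu_le : forall x, mu x <= mumax.

Lemma Psi_sub (H1 H2 : R -> R) (k : R) (v : V -> R) (x : V) :
  Psi nbrs w mu H1 v x - k * Psi nbrs w mu H2 v x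
  = Psi nbrs w mu (fun z => H1 z - k * H2 z) v x.
Proof.
  unfold Psi. induction (nbrs x) as [| y l IH]; simpl; [ring |].
  transitivity (/ mu x * (w x y * (H1 (v y - v x) - k * H2 (v y - v x)))
                + (/ mu x * fold_right (fun y acc => w x y * H1 (v y - v x) + acc) 0 l
                   - k * (/ mu x * fold_right (fun y acc => w x y * H2 (v y - v x) + acc) 0 l)));
    [ring | rewrite IH; ring].
Qed.

Lemma Psi_shift (H : R -> R) (v : V -> R) (s : R) (x : V) :
  Psi nbrs w mu H (fun y => v y + s) x = Psi nbrs w mu H v x.
Proof.
  unfold Psi. f_equal. induction (nbrs x) as [| y l IH]; simpl; [reflexivity |].
  rewrite IH. replace (v y + s - (v x + s)) with (v y - v x) by ring. reflexivity.
Qed.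

Lemma Psi_nonneg (H : R -> R) (v : V -> R) (x : V) :
  (forall z, 0 <= H z) -> 0 <= Psi nbrs w mu H v x.
Proof.
  intros HH. apply Rmult_le_pos; [left; apply Rinv_0_lt_compat, mu_pos |].
  apply (fold_right_sum_nonneg (fun y => w x y * H (v y - v x))).
  intros z Hz. apply Rmult_le_pos; [| apply HH].
  apply nbrs_adj, w_ge in Hz. lra.
Qed.

Lemma Psi_ge_edge (H : R -> R) (v : V -> R) (x y : V) :
  (forall z, 0 <= H z) -> adj x y -> wmin / mumax * H (v y - v x) <= Psi nbrs w mu H v x.
Proof.
  intros HH Hxy.
  assert (Hmu : 0 < mu x) by apply mu_pos.
  assert (Hc : wmin / mumax <= / mu x * w x y).
  { pose proof (w_ge x y Hxy). pose proof (mu_le x).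
    assert (/ mumax <= / mu x) by (apply Rinv_le_contravar; lra).
    assert (0 < / mumax) by (apply Rinv_0_lt_compat; lra).
    unfold Rdiv. rewrite Rmult_comm. apply Rmult_le_compat; lra. }
  apply Rle_trans with (/ mu x * (w x y * H (v y - v x))).
  - rewrite <- Rmult_assoc. apply Rmult_le_compat_r; [apply HH | exact Hc].
  - apply Rmult_le_compat_l; [left; apply Rinv_0_lt_compat; exact Hmu |].
    apply (fold_right_sum_ge_term (fun y => w x y * H (v y - v x))); [| apply nbrs_adj, Hxy].
    intros z Hz. apply Rmult_le_pos; [| apply HH].
    apply nbrs_adj, w_ge in Hz. lra.
Qed.

Hypothesis adj_sym : forall x y, adj x y -> adj y x.

Lemma Ups_gap_harnack_walk (alpha t1 t2 : R) (f g : R -> V -> R) (n : nat) (x1 x2 : V) :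
  0 < alpha < 1 ->
  (forall t x, t1 <= t -> derivable_pt_lim (fun s => f s x) t (g t x)) ->
  (forall t x, t1 <= t -> Psi nbrs w mu (Ups_gap alpha) (f t) x <= g t x) ->
  walk adj n x1 x2 -> t1 < t2 ->
  f t1 x1 <= f t2 x2 + 2 * mumax * INR n ^ 2 / (wmin * (1 - alpha) * (t2 - t1)).
Proof.
  intros Halpha Hf_der Hg Hwalk Ht12.
  assert (Hmumax : 0 < mumax) by (pose proof (mu_pos x1); pose proof (mu_le x1); lra).
  assert (Hc : 0 < wmin / mumax) by (apply Rdiv_lt_0_compat; lra).
  assert (Hgap_nonneg : forall z, 0 <= Ups_gap alpha z) by (intro; apply Ups_gap_nonneg, Halpha).
  assert (Hmono : forall x a b, t1 <= a <= b -> f a x <= f b x).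
  { intros x a b Hab.
    apply (le_of_deriv_nonneg (fun s => f s x) (fun s => g s x)); [lra | |]; intros s Hs.
    - apply Hf_der. lra.
    - eapply Rle_trans; [apply Psi_nonneg, Hgap_nonneg | apply Hg; lra]. }
  replace (2 * mumax * INR n ^ 2 / (wmin * (1 - alpha) * (t2 - t1)))
    with (INR n ^ 2 * (2 / (wmin / mumax * (1 - alpha))) / (t2 - t1))
    by (field; repeat split; lra).
  apply (walk_bound _ adj f); [exact Hmono | | exact Hwalk | exact Ht12].
  intros x y a tau Hxy Ha Htau.
  pose proof (Ups_gap_transfer (fun s => f s x) (fun s => f s y) (fun s => g s y)
                a (a + tau) (wmin / mumax) alpha Halpha Hc ltac:(lra)) as Htransfer.
  replace (a + tau - a) with tau in Htransfer by ring.
  apply Htransfer.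
  - intros r Hr. apply Hmono. lra.
  - intros r Hr. apply Hf_der. lra.
  - intros r Hr. eapply Rle_trans; [| apply Hg; lra].
    apply (Psi_ge_edge _ (f r)); [exact Hgap_nonneg | apply adj_sym, Hxy].
Qed.

End Weighted_graph.

Theorem theorem6p2
  (V : Type) (adj : V -> V -> Prop) (nbrs : V -> list V)
  (* undirected, locally finite, connected graph *)
  (Hsym : forall x y, adj x y -> adj y x)
  (Hnbrs : forall x y, In y (nbrs x) <-> adj x y)
  (Hnodup : forall x, NoDup (nbrs x))
  (Hconn : connected adj)
  (* weights and measure *)
  (w : V -> V -> R) (mu : V -> R) (wmin mumax : R)
  (Hwmin : 0 < wmin)
  (Hwsym : forall x y, w x y = w y x)
  (Hw : forall x y, adj x y -> wmin <= w x y)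
  (Hmu : forall x, 0 < mu x)
  (Hmumax : forall x, mu x <= mumax)
  (alpha : R) (Halpha : 0 < alpha < 1)
  (* u : (0,oo) x V -> (0,oo), C^1 in time with time derivative du *)
  (u du : R -> V -> R)
  (Hupos : forall t x, 0 < t -> 0 < u t x)
  (Hder : forall t x, 0 < t -> derivable_pt_lim (fun s => u s x) t (du t x))
  (Hdcont : forall t x, 0 < t -> continuity_pt (fun s => du s x) t)
  (eta : R -> R)
  (Heta_nonneg : forall t, 0 < t -> 0 <= eta t)
  (Heta_cont : forall t, 0 < t -> continuity_pt eta t)
  (* d/dt log u >= Psi_Ups(log u) - 1/alpha Psi_{Ups_alpha}(log u) - eta *)
  (Hineq : forall t x, 0 < t ->
     du t x / u t x >=
       Psi nbrs w mu Ups (fun y => ln (u t y)) x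
       - / alpha * Psi nbrs w mu (Ups_a alpha) (fun y => ln (u t y)) x
       - eta t) :
  forall (t1 t2 : R) (x1 x2 : V) (n : nat),
    0 < t1 -> t1 < t2 ->
    graph_dist adj x1 x2 n ->
    forall pr : Riemann_integrable eta t1 t2,
      u t1 x1 <=
        u t2 x2 * exp (RiemannInt pr
          + 2 * mumax * (INR n) ^ 2 / (wmin * (1 - alpha) * (t2 - t1))).
Proof.
  intros t1 t2 x1 x2 n Ht1 Ht12 [Hwalk _] pr.
  set (f := fun t x => ln (u t x) + RInt eta t1 t).
  set (g := fun t x => du t x / u t x + eta t).
  assert (Hf_der : forall t x, t1 <= t -> derivable_pt_lim (fun s => f s x) t (g t x)).
  { intros t x Ht. unfold f, g.
    replace (du t x / u t x) with (/ u t x * du t x) by (unfold Rdiv; ring).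
    apply (derivable_pt_lim_plus (fun s => ln (u s x))).
    - apply (derivable_pt_lim_comp (fun s => u s x) ln);
        [apply Hder | apply derivable_pt_lim_ln, Hupos]; lra.
    - apply (RInt_derivable_pt_lim eta 0); [exact Heta_cont | exact Ht1 | lra]. }
  assert (Hg : forall t x, t1 <= t -> Psi nbrs w mu (Ups_gap alpha) (f t) x <= g t x).
  { intros t x Ht. unfold f, g, Ups_gap. rewrite Psi_shift.
    rewrite <- Psi_sub. specialize (Hineq t x ltac:(lra)). lra. }
  pose proof (Ups_gap_harnack_walk V adj nbrs w mu wmin mumax Hnbrs Hwmin Hw Hmu Hmumax Hsym
                alpha t1 t2 f g n x1 x2 Halpha Hf_der Hg Hwalk Ht12) as Hmain.
  unfold f in Hmain. rewrite RInt_point, (RInt_Reals _ _ _ pr) in Hmain.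
  apply le_mul_exp_of_ln_le; [apply Hupos; lra | apply Hupos; lra |].
  change (zero : R) with 0 in Hmain. lra.
Qed.
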